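(* Let $S>0$, $I\ge1$, $N_1,\dots,N_I$ positive integers and $\theta_1>\dots>\theta_I>0$. Let $\lambda(k)=\Big(\frac{\sum_{i=1}^k N_i\sqrt{\theta_i}}{S+\sum_{i=1}^k N_i}\Big)^2$, $K=\max\{k\in\{1,\dots,I\}:\theta_k>\lambda(k)\}$, $\lambda^*=\lambda(K)$, and for $i\le K$ let $p^*_i=\sqrt{\theta_i\lambda^*}$ and $s^*_i=\sqrt{\theta_i/\lambda^*}-1$ (the optimal complete-information differentiated prices and allocations). For each $q\in\{1,\dots,K-1\}$ the equation $$t^2\ln t-(t^2-1)+\frac{t\sum_{k=1}^{q}N_k+N_{q+1}}{S+\sum_{k=1}^{K}N_k}(t-1)=0$$ has a unique solution $t_q$ in $t>1$. Moreover, if $\sqrt{\theta_q/\theta_{q+1}}\ge t_q$ for all $q=1,\dots,K-1$, then there exist quantity thresholds $s^1_{th}>s^2_{th}>\dots>s^{K-1}_{th}>0$ such that, under the quantity-based price menu $p(s)=p^*_q$ for $s^q_{th}<s\le s^{q-1}_{th}$ ($q=1,\dots,K$, with $s^0_{th}=+\infty$, $s^K_{th}=0$), for every $i\in\{1,\dots,K\}$ the quantity $s^*_i$ maximizes a group-$i$ user's surplus $\theta_i\ln(1+s)-p(s)s$ over $s\ge0$ (with surplus $0$ at $s=0$) and is charged unit price $p(s^*_i)=p^*_i$; consequently the menu attains the same revenue $\sum_{i=1}^K N_ip^*_is^*_i$ as optimal complete price differentiation under complete information.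
   Context: Group $i$ consists of $N_i$ users, each with utility $\theta_i\ln(1+s)$. Under incomplete information the provider (with total resource $S$) does not know which group each user belongs to; it publishes one menu in which the unit price depends on the purchased quantity, and each user freely chooses a quantity to maximize utility minus payment $p(s)s$. *)

From Stdlib Require Import Reals Lra Lia.
Open Scope R_scope.

Fixpoint sumR (f : nat -> R) (k : nat) : R :=
  match k with
  | O => 0
  | S k' => sumR f k' + f k
  end.

Definition lam (Stot : R) (N : nat -> nat) (theta : nat -> R) (k : nat) : R :=
  (sumR (fun i => INR (N i) * sqrt (theta i)) k / (Stot + sumR (fun i => INR (N i)) k)) ^ 2.

Definition pstar (theta : nat -> R) (lstar : R) (i : nat) : R := sqrt (theta i * lstar).
Definition sstar (theta : nat -> R) (lstar : R) (i : nat) : R := sqrt (theta i / lstar) - 1.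

Definition teq (Stot : R) (N : nat -> nat) (K q : nat) (t : R) : R :=
  t ^ 2 * ln t - (t ^ 2 - 1)
  + (t * sumR (fun k => INR (N k)) q + INR (N (q + 1)%nat))
    / (Stot + sumR (fun k => INR (N k)) K) * (t - 1).

(* lower end of band q: s^q_th for q < K, and s^K_th = 0 *)
Definition lowth (th : nat -> R) (K q : nat) : R :=
  if (q <? K)%nat then th q else 0.

Definition surplus (theta : nat -> R) (pm : R -> R) (i : nat) (s : R) : R :=
  theta i * ln (1 + s) - pm s * s.

(* Write r_i = sqrt theta_i and l = sqrt lambda*, so that p*_i = r_i l and
   1 + s*_i = r_i / l: at the single price p*_i, the quantity s*_i is the peak of
   group i's concave surplus.  Under the menu, a group-i user buying s in band j
   either pays p*_j >= p*_i (j <= i), which is no better than the single-price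
   peak, or buys s <= s*_j at price p*_j (j > i), which is dominated by taking
   s*_j itself.  Because theta_i ln(1 + s) has increasing differences, it then
   suffices that each group q weakly prefers its own option to that of group
   q + 1.  With t = r_q / r_(q+1) and h(t) = t^2 ln t - (t^2 - 1), this adjacent
   condition reads h(t) + (l / r_(q+1)) (t - 1) >= 0; since
   (sum_(k<=q) N_k) r_q + N_(q+1) r_(q+1) <= l (S + sum_(k<=K) N_k), it follows
   from teq_q(t) >= 0.  Finally h is convex on [1, oo) with h(1) = 0, so
   teq_q(t) / (t - 1) is strictly increasing on (1, oo): this yields both the
   unique root t_q and teq_q(t) >= 0 for t >= t_q. *)

From Stdlib Require Import Reals Lra Lia Ranalysis5.
From Coquelicot Require Import Coquelicot.
Open Scope R_scope.

Lemma ln_le_sub_1 x : 0 < x -> ln x <= x - 1.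
Proof. intros Hx. pose proof (exp_ineq1_le (ln x)) as H. rewrite exp_ln in H; lra. Qed.

Lemma ln_nonneg x : 1 <= x -> 0 <= ln x.
Proof. intros Hx. rewrite <- ln_1. apply ln_le; lra. Qed.

Definition hh (t : R) : R := t ^ 2 * ln t - (t ^ 2 - 1).

Lemma hh_le_cubic t : 0 < t -> hh t <= (t - 1) * (t ^ 2 - t - 1).
Proof.
  intros Ht. unfold hh.
  assert (t ^ 2 * ln t <= t ^ 2 * (t - 1))
    by (apply Rmult_le_compat_l; [apply pow2_ge_0 | apply ln_le_sub_1; lra]).
  lra.
Qed.

(* [2 s ln s - s] is the derivative of [hh] at [s]; [hh] is convex on [1, +oo). *)
Lemma hh_ge_tangent s t : 1 <= s -> s <= t ->
  hh s + (2 * s * ln s - s) * (t - s) <= hh t.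
Proof.
  intros Hs Hst. unfold hh.
  assert (Hln : 0 <= ln s) by (apply ln_nonneg; lra).
  assert (Hquot : t * (ln s - ln t) <= s - t).
  { rewrite <- ln_div by lra.
    replace (s - t) with (t * (s / t - 1)) by (field; lra).
    apply Rmult_le_compat_l; [lra |].
    apply ln_le_sub_1, Rdiv_lt_0_compat; lra. }
  assert (0 <= ln s * (t - s) ^ 2) by (apply Rmult_le_pos; [lra | apply pow2_ge_0]).
  assert (0 <= t * (t * (ln t - ln s) - (t - s))) by (apply Rmult_le_pos; lra).
  lra.
Qed.

Lemma hh_le_slope_mul s : 1 <= s -> hh s <= (2 * s * ln s - s) * (s - 1).
Proof.
  intros Hs. unfold hh.
  assert (Hln : 0 <= ln s) by (apply ln_nonneg; lra).
  assert (Hln1 : ln s <= s - 1) by (apply ln_le_sub_1; lra).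
  destruct (Rle_or_lt 2 s) as [H2 | H2].
  - assert (0 <= ln s * (s * (s - 2))) by (apply Rmult_le_pos; nra). lra.
  - assert (ln s * (s * (2 - s)) <= (s - 1) * (s * (2 - s)))
      by (apply Rmult_le_compat_r; nra).
    assert (0 <= (s - 1) ^ 3) by (apply pow_le; lra).
    lra.
Qed.

(* [hh 1 = 0], so this is the monotonicity of chord slopes from 1 of the convex [hh]. *)
Lemma hh_ratio_le s t : 1 < s -> s <= t -> hh s / (s - 1) <= hh t / (t - 1).
Proof.
  intros Hs Hst.
  assert (Htan := hh_ge_tangent s t ltac:(lra) Hst).
  assert (Hslope := hh_le_slope_mul s ltac:(lra)).
  assert (0 <= (t - s) * ((2 * s * ln s - s) * (s - 1) - hh s))
    by (apply Rmult_le_pos; lra).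
  assert (0 <= (s - 1) * (hh t - hh s - (2 * s * ln s - s) * (t - s)))
    by (apply Rmult_le_pos; lra).
  apply (Rmult_le_reg_r ((s - 1) * (t - 1))); [nra |].
  replace (hh s / (s - 1) * ((s - 1) * (t - 1))) with (hh s * (t - 1)) by (field; lra).
  replace (hh t / (t - 1) * ((s - 1) * (t - 1))) with (hh t * (s - 1)) by (field; lra).
  lra.
Qed.

(* [teq Stot N K q] is [tfun A B D] with [A = sum_(k<=q) N_k], [B = N_(q+1)] and
   [D = Stot + sum_(k<=K) N_k]. *)
Definition tfun (A B D t : R) : R := hh t + (t * A + B) / D * (t - 1).

Lemma tfun_ratio_increasing A B D s t : 0 < D -> 1 < s -> s <= t ->
  tfun A B D s / (s - 1) + A / D * (t - s) <= tfun A B D t / (t - 1).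
Proof.
  intros HD Hs Hst. unfold tfun.
  assert (Hh := hh_ratio_le s t Hs Hst).
  replace ((hh s + (s * A + B) / D * (s - 1)) / (s - 1) + A / D * (t - s))
    with (hh s / (s - 1) + (t * A + B) / D) by (field; lra).
  replace ((hh t + (t * A + B) / D * (t - 1)) / (t - 1))
    with (hh t / (t - 1) + (t * A + B) / D) by (field; lra).
  lra.
Qed.

Lemma tfun_nonneg_after_root A B D tq t : 0 < D -> 0 <= A -> 1 < tq -> tq <= t ->
  tfun A B D tq = 0 -> 0 <= tfun A B D t.
Proof.
  intros HD HA Htq Ht Hroot.
  assert (Hinc := tfun_ratio_increasing A B D tq t HD Htq Ht).
  rewrite Hroot in Hinc.
  assert (0 <= A / D * (t - tq)) by (apply Rmult_le_pos; [apply Rdiv_le_0_compat |]; lra).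
  replace (tfun A B D t) with (tfun A B D t / (t - 1) * (t - 1)) by (field; lra).
  apply Rmult_le_pos; [unfold Rdiv in *; lra | lra].
Qed.

Lemma tfun_root_unique A B D s t : 0 < D -> 0 < A -> 1 < s -> 1 < t ->
  tfun A B D s = 0 -> tfun A B D t = 0 -> s = t.
Proof.
  intros HD HA Hs Ht Hfs Hft.
  assert (HAD : 0 < A / D) by (apply Rdiv_lt_0_compat; lra).
  destruct (Rle_or_lt s t) as [Hst | Hts].
  - assert (Hinc := tfun_ratio_increasing A B D s t HD Hs Hst).
    rewrite Hfs, Hft, !Rdiv_0_l in Hinc. nra.
  - assert (Hinc := tfun_ratio_increasing A B D t s HD Ht (Rlt_le _ _ Hts)).
    rewrite Hfs, Hft, !Rdiv_0_l in Hinc. nra.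
Qed.

Lemma tfun_root_exists A B D : 0 < A -> 0 <= B -> 0 < D -> A + B < D ->
  exists t, 1 < t /\ tfun A B D t = 0.
Proof.
  intros HA HB HD HABD.
  set (a := A / D). set (e := 1 - (A + B) / D). set (t0 := 1 + e / 4).
  assert (Ha : 0 < a) by (apply Rdiv_lt_0_compat; lra).
  assert (He : 0 < e <= 1).
  { unfold e. split.
    - assert ((A + B) / D < 1) by (apply (Rdiv_lt_1 _ _ HD); lra). lra.
    - assert (0 <= (A + B) / D) by (apply Rdiv_le_0_compat; lra). lra. }
  assert (Hneg : tfun A B D t0 < 0).
  { unfold tfun. assert (Hc := hh_le_cubic t0 ltac:(unfold t0; lra)).
    replace ((t0 * A + B) / D) with (1 - e + a * (e / 4))
      by (unfold t0, e, a; field; lra).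
    assert (a < 1) by (unfold a; apply (Rdiv_lt_1 _ _ HD); lra).
    assert (Hlt : t0 ^ 2 - t0 - 1 + (1 - e + a * (e / 4)) < 0).
    { replace (t0 ^ 2 - t0 - 1 + (1 - e + a * (e / 4)))
        with (e / 4 * (e / 4 + a - 3)) by (unfold t0; field).
      apply Rmult_pos_neg; lra. }
    assert (0 < t0 - 1) by (unfold t0; lra).
    nra. }
  assert (Hexp : 2 <= exp 1) by (pose proof (exp_ineq1_le 1); lra).
  assert (Hpos : 0 < tfun A B D (exp 1)).
  { unfold tfun, hh. rewrite ln_exp.
    assert (0 <= (exp 1 * A + B) / D * (exp 1 - 1))
      by (apply Rmult_le_pos; [apply Rdiv_le_0_compat; nra | lra]).
    lra. }
  destruct (IVT_interv (tfun A B D) t0 (exp 1)) as [z [Hz Hroot]]; auto.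
  - intros x Hx. apply continuity_pt_filterlim, (ex_derive_continuous (tfun A B D)).
    unfold tfun, hh. auto_derive. unfold t0 in Hx; lra.
  - unfold t0; lra.
  - exists z. split; [unfold t0 in Hz; lra | exact Hroot].
Qed.

Lemma tfun_unique_root A B D : 0 < A -> 0 <= B -> 0 < D -> A + B < D ->
  exists! t, 1 < t /\ tfun A B D t = 0.
Proof.
  intros HA HB HD HABD.
  destruct (tfun_root_exists A B D HA HB HD HABD) as [t [Ht Hroot]].
  exists t. split; [auto |].
  intros s [Hs Hroot_s]. apply (tfun_root_unique A B D); auto.
Qed.

(* With price [r * l] and quantity [r / l - 1], a group with [theta = r1 ^ 2] gets
   surplus [r1 ^ 2 * ln (r / l) - (r ^ 2 - r * l)]; here [r2] is the next group's option. *)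
Lemma sqrt_option_ic (r1 r2 l c : R) : 0 < l -> 0 < r2 -> r2 <= r1 -> c * r2 <= l ->
  0 <= hh (r1 / r2) + c * (r1 / r2 - 1) ->
  r1 ^ 2 * ln (r2 / l) - (r2 ^ 2 - r2 * l) <= r1 ^ 2 * ln (r1 / l) - (r1 ^ 2 - r1 * l).
Proof.
  intros Hl Hr2 Hr Hc Hroot.
  set (t := r1 / r2) in *.
  assert (Ht : 1 <= t) by (unfold t; apply Rle_div_r; lra).
  assert (Er1 : r1 = t * r2) by (unfold t; field; lra).
  assert (Eln : ln (r1 / l) - ln (r2 / l) = ln t)
    by (unfold t; rewrite !ln_div by lra; ring).
  assert (Hgap : r2 ^ 2 * (c * (t - 1)) <= l * r2 * (t - 1)).
  { replace (r2 ^ 2 * (c * (t - 1))) with (c * r2 * (r2 * (t - 1))) by ring.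
    replace (l * r2 * (t - 1)) with (l * (r2 * (t - 1))) by ring.
    apply Rmult_le_compat_r; [apply Rmult_le_pos |]; lra. }
  assert (0 <= r2 ^ 2 * (hh t + c * (t - 1))) by (apply Rmult_le_pos; [apply pow2_ge_0 | lra]).
  unfold hh in *. rewrite Er1 in *. nra.
Qed.

Lemma log_surplus_le_tangent th p s s0 : 0 <= th -> -1 < s -> -1 < s0 ->
  th * ln (1 + s) - p * s
  <= th * ln (1 + s0) - p * s0 + (th / (1 + s0) - p) * (s - s0).
Proof.
  intros Hth Hs Hs0.
  assert (Hln : ln (1 + s) - ln (1 + s0) <= (s - s0) / (1 + s0)).
  { rewrite <- ln_div by lra.
    replace ((s - s0) / (1 + s0)) with ((1 + s) / (1 + s0) - 1) by (field; lra).
    apply ln_le_sub_1, Rdiv_lt_0_compat; lra. }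
  assert (Hmul : th * (ln (1 + s) - ln (1 + s0)) <= th / (1 + s0) * (s - s0)).
  { replace (th / (1 + s0) * (s - s0)) with (th * ((s - s0) / (1 + s0))) by (field; lra).
    apply Rmult_le_compat_l; lra. }
  lra.
Qed.

Lemma log_surplus_le_peak th p s s0 : 0 < th -> 0 < p -> -1 < s -> p * (1 + s0) = th ->
  th * ln (1 + s) - p * s <= th * ln (1 + s0) - p * s0.
Proof.
  intros Hth Hp Hs Hfoc.
  assert (Hs0 : -1 < s0) by nra.
  assert (Hslope : th / (1 + s0) - p = 0) by (rewrite <- Hfoc; field; lra).
  pose proof (log_surplus_le_tangent th p s s0 ltac:(lra) Hs Hs0) as H.
  rewrite Hslope in H. lra.
Qed.

Lemma log_surplus_le_below_peak th p s s0 : 0 < p -> -1 < s -> s <= s0 -> p * (1 + s0) <= th ->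
  th * ln (1 + s) - p * s <= th * ln (1 + s0) - p * s0.
Proof.
  intros Hp Hs Hss0 Hpeak.
  assert (Hth : 0 < th) by (apply Rlt_le_trans with (p * (1 + s0)); [apply Rmult_lt_0_compat |]; lra).
  assert (Hslope : p <= th / (1 + s0)) by (apply Rle_div_r; lra).
  pose proof (log_surplus_le_tangent th p s s0 ltac:(lra) Hs ltac:(lra)) as H.
  assert ((th / (1 + s0) - p) * (s - s0) <= 0) by nra.
  lra.
Qed.

Lemma sumR_le f g n : (forall k, (1 <= k <= n)%nat -> f k <= g k) -> sumR f n <= sumR g n.
Proof.
  induction n as [| n IH]; simpl; intros H; [lra |].
  assert (f (S n) <= g (S n)) by (apply H; lia).
  assert (sumR f n <= sumR g n) by (apply IH; intros; apply H; lia).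
  lra.
Qed.

Lemma sumR_ext f g n : (forall k, (1 <= k <= n)%nat -> f k = g k) -> sumR f n = sumR g n.
Proof.
  induction n as [| n IH]; simpl; intros H; [reflexivity |].
  rewrite (H (S n)) by lia. rewrite IH; [reflexivity |]. intros k Hk. apply H. lia.
Qed.

Lemma sumR_le_sumR_n f m n : (forall k, (1 <= k <= n)%nat -> 0 <= f k) -> (m <= n)%nat ->
  sumR f m <= sumR f n.
Proof.
  intros Hf Hmn. induction Hmn as [| n Hmn IH]; simpl; [lra |].
  assert (0 <= f (S n)) by (apply Hf; lia).
  assert (sumR f m <= sumR f n) by (apply IH; intros; apply Hf; lia).
  lra.
Qed.

Lemma sumR_pos f n : (forall k, (1 <= k <= n)%nat -> 0 < f k) -> (1 <= n)%nat -> 0 < sumR f n.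
Proof.
  intros Hf Hn. destruct n as [| n]; [lia |]. simpl.
  assert (0 <= sumR f n).
  { apply Rle_trans with (sumR (fun _ => 0) n).
    - clear. induction n; simpl; lra.
    - apply sumR_le. intros k Hk. left. apply Hf. lia. }
  assert (0 < f (S n)) by (apply Hf; lia).
  lra.
Qed.

Lemma sumR_mult_r f c n : sumR (fun k => f k * c) n = sumR f n * c.
Proof. induction n as [| n IH]; simpl; [ring | rewrite IH; ring]. Qed.

Lemma sumR_prefix_weighted_le (w r : nat -> R) q n : (q < n)%nat ->
  (forall k, (1 <= k <= n)%nat -> 0 <= w k) -> (forall k, (1 <= k <= n)%nat -> 0 <= r k) ->
  (forall k, (1 <= k <= q)%nat -> r q <= r k) ->
  sumR w q * r q + w (q + 1)%nat * r (q + 1)%nat <= sumR (fun k => w k * r k) n.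
Proof.
  intros Hqn Hw Hr Hrq.
  apply Rle_trans with (sumR (fun k => w k * r k) (S q)).
  - simpl. replace (S q) with (q + 1)%nat by lia.
    rewrite <- sumR_mult_r.
    enough (sumR (fun k => w k * r q) q <= sumR (fun k => w k * r k) q) by lra.
    apply sumR_le. intros k Hk. apply Rmult_le_compat_l; [apply Hw; lia | apply Hrq; lia].
  - apply sumR_le_sumR_n; [| lia]. intros k Hk. apply Rmult_le_pos; [apply Hw | apply Hr]; lia.
Qed.

Lemma strict_anti_of_succ (f : nat -> R) n :
  (forall i, (1 <= i < n)%nat -> f (i + 1)%nat < f i) ->
  forall i j, (1 <= i)%nat -> (i < j <= n)%nat -> f j < f i.
Proof.
  intros Hsucc i j Hi [Hij Hjn]. induction Hij as [| j Hij IH].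
  - replace (S i) with (i + 1)%nat by lia. apply Hsucc; lia.
  - replace (S j) with (j + 1)%nat by lia.
    assert (f (j + 1)%nat < f j) by (apply Hsucc; lia).
    assert (f j < f i) by (apply IH; lia).
    lra.
Qed.

Lemma menu_band_exists (th : nat -> R) K x : (1 <= K)%nat -> 0 < x ->
  exists j, (1 <= j <= K)%nat /\ lowth th K j < x /\ (j = 1%nat \/ x <= th (j - 1)%nat).
Proof.
  intros HK Hx.
  assert (Hdown : forall d n, (n + d = K - 1)%nat -> (n = 0%nat \/ x <= th n) ->
     exists j, (1 <= j <= K)%nat /\ lowth th K j < x /\ (j = 1%nat \/ x <= th (j - 1)%nat)).
  { induction d as [| d IH]; intros n Hn Hup.
    - exists K. unfold lowth. rewrite Nat.ltb_irrefl.
      replace (K - 1)%nat with n by lia. intuition lia.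
    - destruct (Rlt_or_le (th (S n)) x) as [Hlow | Hup'].
      + exists (S n). unfold lowth. replace (S n <? K)%nat with true
          by (symmetry; apply Nat.ltb_lt; lia).
        replace (S n - 1)%nat with n by lia. intuition lia.
      + apply (IH (S n)); [lia | auto]. }
  apply (Hdown (K - 1)%nat 0%nat); auto.
Qed.

Definition option_surplus (theta p s : nat -> R) (i j : nat) : R :=
  theta i * ln (1 + s j) - p j * s j.

Section IncentiveCompatibility.

Variables (theta p s : nat -> R) (K : nat).
Hypothesis p_pos : forall i, (1 <= i <= K)%nat -> 0 < p i.
Hypothesis s_pos : forall i, (1 <= i <= K)%nat -> 0 < s i.
Hypothesis p_foc : forall i, (1 <= i <= K)%nat -> p i * (1 + s i) = theta i.
Hypothesis p_anti : forall i j, (1 <= i <= j)%nat -> (j <= K)%nat -> p j <= p i.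
Hypothesis s_anti : forall i j, (1 <= i)%nat -> (i < j <= K)%nat -> s j < s i.
Hypothesis adjacent_ic : forall q, (1 <= q < K)%nat ->
  option_surplus theta p s q (q + 1) <= option_surplus theta p s q q.

Lemma theta_anti i j : (1 <= i <= j)%nat -> (j <= K)%nat -> theta j <= theta i.
Proof.
  intros Hij HjK. rewrite <- (p_foc i), <- (p_foc j) by lia.
  assert (s j <= s i) by (destruct (Nat.eq_dec i j); [subst; lra | left; apply s_anti; lia]).
  assert (p j <= p i) by (apply p_anti; lia).
  assert (0 < p j) by (apply p_pos; lia).
  assert (0 < s j) by (apply s_pos; lia).
  apply Rmult_le_compat; lra.
Qed.

(* Single crossing: [option_surplus i j - option_surplus i (j + 1)] exceeds
   [option_surplus j j - option_surplus j (j + 1)] by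
   [(theta i - theta j) * (ln (1 + s j) - ln (1 + s (j + 1)))]. *)
Lemma option_surplus_le_own i j : (1 <= i <= j)%nat -> (j <= K)%nat ->
  option_surplus theta p s i j <= option_surplus theta p s i i.
Proof.
  induction j as [| j IH]; intros Hij HjK; [lia |].
  destruct (Nat.eq_dec i (S j)) as [-> | Hne]; [lra |].
  replace (S j) with (j + 1)%nat by lia.
  assert (Hadj := adjacent_ic j ltac:(lia)).
  assert (Hth : theta j <= theta i) by (apply theta_anti; lia).
  assert (Hln : ln (1 + s (j + 1)%nat) <= ln (1 + s j)).
  { assert (s (j + 1)%nat < s j) by (apply s_anti; lia).
    assert (0 < s (j + 1)%nat) by (apply s_pos; lia).
    apply ln_le; lra. }
  assert (Hcross : 0 <= (theta i - theta j) * (ln (1 + s j) - ln (1 + s (j + 1)%nat)))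
    by (apply Rmult_le_pos; lra).
  assert (IH' := IH ltac:(lia) ltac:(lia)).
  unfold option_surplus in *. lra.
Qed.

Variable pm : R -> R.
Hypothesis menu : forall q x, (1 <= q <= K)%nat ->
  lowth (fun q => s (q + 1)%nat) K q < x -> (q = 1%nat \/ x <= s (q - 1 + 1)%nat) ->
  pm x = p q.

Lemma menu_price_own i : (1 <= i <= K)%nat -> pm (s i) = p i.
Proof.
  intros Hi. apply menu; [exact Hi | |].
  - unfold lowth. destruct (i <? K)%nat eqn:E.
    + apply Nat.ltb_lt in E. apply s_anti; lia.
    + apply s_pos, Hi.
  - destruct (Nat.eq_dec i 1) as [-> | Hne]; [now left | right].
    replace (i - 1 + 1)%nat with i by lia. lra.
Qed.

Lemma menu_surplus_le_own i x : (1 <= i <= K)%nat -> 0 <= x ->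
  surplus theta pm i x <= surplus theta pm i (s i).
Proof.
  intros Hi Hx. unfold surplus. rewrite menu_price_own by exact Hi.
  assert (Hth : 0 < theta i).
  { rewrite <- (p_foc i Hi). pose proof (s_pos i Hi).
    apply Rmult_lt_0_compat; [apply p_pos, Hi | lra]. }
  assert (Hpeak : forall y, -1 < y -> theta i * ln (1 + y) - p i * y <= theta i * ln (1 + s i) - p i * s i)
    by (intros y Hy; apply log_surplus_le_peak; auto).
  destruct Hx as [Hx | <-].
  - destruct (menu_band_exists (fun q => s (q + 1)%nat) K x ltac:(lia) Hx)
      as [j [Hj [Hlow Hup]]].
    rewrite (menu j x Hj Hlow Hup).
    destruct (Compare_dec.le_lt_dec j i) as [Hji | Hij].
    + assert (p i * x <= p j * x) by (apply Rmult_le_compat_r; [lra | apply p_anti; lia]).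
      assert (Hp := Hpeak x ltac:(lra)). lra.
    + destruct Hup as [-> | Hup]; [lia |].
      replace (j - 1 + 1)%nat with j in Hup by lia.
      apply Rle_trans with (option_surplus theta p s i j);
        [| apply option_surplus_le_own; lia].
      apply log_surplus_le_below_peak; [apply p_pos; lia | lra | exact Hup |].
      rewrite p_foc by lia. apply theta_anti; lia.
  - rewrite Rmult_0_r. pose proof (Hpeak 0 ltac:(lra)) as H0. lra.
Qed.

End IncentiveCompatibility.

Section OptimalPrices.

Variables (Stot : R) (N : nat -> nat) (theta : nat -> R) (K : nat).
Hypothesis Stot_pos : 0 < Stot.
Hypothesis K_pos : (1 <= K)%nat.
Hypothesis N_pos : forall i, (1 <= i <= K)%nat -> (0 < N i)%nat.
Hypothesis theta_pos : forall i, (1 <= i <= K)%nat -> 0 < theta i.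
Hypothesis theta_decr : forall i j, (1 <= i)%nat -> (i < j <= K)%nat -> theta j < theta i.
Hypothesis lam_lt_theta : lam Stot N theta K < theta K.

Local Notation lstar := (lam Stot N theta K).
Local Notation D := (Stot + sumR (fun i => INR (N i)) K).
Local Notation r i := (sqrt (theta i)).

Lemma N_sum_pos q : (1 <= q <= K)%nat -> 0 < sumR (fun i => INR (N i)) q.
Proof. intros Hq. apply sumR_pos; [intros k Hk; apply lt_0_INR, N_pos |]; lia. Qed.

Lemma D_pos : 0 < D.
Proof. pose proof (N_sum_pos K ltac:(lia)). lra. Qed.

Lemma weighted_sqrt_sum_pos : 0 < sumR (fun i => INR (N i) * r i) K.
Proof.
  apply sumR_pos; [| lia]. intros k Hk.
  apply Rmult_lt_0_compat; [apply lt_0_INR, N_pos | apply sqrt_lt_R0, theta_pos]; lia.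
Qed.

Lemma sqrt_lam_mul_D : sqrt lstar * D = sumR (fun i => INR (N i) * r i) K.
Proof.
  pose proof D_pos. pose proof weighted_sqrt_sum_pos.
  unfold lam. rewrite sqrt_pow2 by (apply Rdiv_le_0_compat; lra).
  field. lra.
Qed.

Lemma lam_pos : 0 < lstar.
Proof. apply pow_lt, Rdiv_lt_0_compat; [apply weighted_sqrt_sum_pos | apply D_pos]. Qed.

Lemma sqrt_theta_le i j : (1 <= i <= j)%nat -> (j <= K)%nat -> r j <= r i.
Proof.
  intros Hij HjK. apply sqrt_le_1_alt.
  destruct (Nat.eq_dec i j) as [-> | Hne]; [lra | left; apply theta_decr; lia].
Qed.

Lemma sqrt_lam_lt i : (1 <= i <= K)%nat -> sqrt lstar < r i.
Proof.
  intros Hi. apply Rlt_le_trans with (r K); [| apply sqrt_theta_le; lia].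
  apply sqrt_lt_1_alt. pose proof lam_pos. lra.
Qed.

Lemma pstar_eq i : (1 <= i <= K)%nat -> pstar theta lstar i = r i * sqrt lstar.
Proof. intros Hi. apply sqrt_mult_alt. left. apply theta_pos, Hi. Qed.

Lemma sstar_eq i : sstar theta lstar i = r i / sqrt lstar - 1.
Proof. unfold sstar. rewrite sqrt_div_alt by apply lam_pos. reflexivity. Qed.

Lemma pstar_pos i : (1 <= i <= K)%nat -> 0 < pstar theta lstar i.
Proof.
  intros Hi. rewrite pstar_eq by exact Hi.
  apply Rmult_lt_0_compat; apply sqrt_lt_R0; [apply theta_pos, Hi | apply lam_pos].
Qed.

Lemma sstar_pos i : (1 <= i <= K)%nat -> 0 < sstar theta lstar i.
Proof.
  intros Hi. rewrite sstar_eq.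
  assert (Hl : 0 < sqrt lstar) by apply sqrt_lt_R0, lam_pos.
  assert (sqrt lstar < r i) by (apply sqrt_lam_lt, Hi).
  assert (1 < r i / sqrt lstar) by (apply Rlt_div_r; lra).
  lra.
Qed.

Lemma pstar_sstar_foc i : (1 <= i <= K)%nat ->
  pstar theta lstar i * (1 + sstar theta lstar i) = theta i.
Proof.
  intros Hi. rewrite pstar_eq, sstar_eq by exact Hi.
  assert (0 < sqrt lstar) by apply sqrt_lt_R0, lam_pos.
  rewrite <- (pow2_sqrt (theta i)) at 3 by (left; apply theta_pos, Hi).
  field. lra.
Qed.

Lemma pstar_anti i j : (1 <= i <= j)%nat -> (j <= K)%nat ->
  pstar theta lstar j <= pstar theta lstar i.
Proof.
  intros Hij HjK. rewrite !pstar_eq by lia.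
  apply Rmult_le_compat_r; [apply sqrt_pos | apply sqrt_theta_le; lia].
Qed.

Lemma sstar_anti i j : (1 <= i)%nat -> (i < j <= K)%nat ->
  sstar theta lstar j < sstar theta lstar i.
Proof.
  intros Hi Hij. rewrite !sstar_eq.
  assert (0 < sqrt lstar) by apply sqrt_lt_R0, lam_pos.
  assert (r j < r i) by (apply sqrt_lt_1_alt; split; [left; apply theta_pos | apply theta_decr]; lia).
  enough (r j / sqrt lstar < r i / sqrt lstar) by lra.
  apply Rmult_lt_compat_r; [apply Rinv_0_lt_compat |]; lra.
Qed.

Lemma teq_unique_root q : (1 <= q <= K - 1)%nat -> exists! t, 1 < t /\ teq Stot N K q t = 0.
Proof.
  intros Hq.
  apply (tfun_unique_root (sumR (fun k => INR (N k)) q) (INR (N (q + 1)%nat)) D).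
  - apply N_sum_pos. lia.
  - apply pos_INR.
  - apply D_pos.
  - replace (sumR (fun k => INR (N k)) q + INR (N (q + 1)%nat))
      with (sumR (fun k => INR (N k)) (S q)) by (simpl; rewrite Nat.add_1_r; reflexivity).
    enough (sumR (fun k => INR (N k)) (S q) <= sumR (fun k => INR (N k)) K) by lra.
    apply sumR_le_sumR_n; [intros; apply pos_INR | lia].
Qed.

Lemma option_surplus_star i j : (1 <= i <= K)%nat -> (1 <= j <= K)%nat ->
  option_surplus theta (pstar theta lstar) (sstar theta lstar) i j
  = r i ^ 2 * ln (r j / sqrt lstar) - (r j ^ 2 - r j * sqrt lstar).
Proof.
  intros Hi Hj. unfold option_surplus. rewrite pstar_eq, sstar_eq by exact Hj.
  rewrite (pow2_sqrt (theta i)) by (left; apply theta_pos, Hi).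
  replace (1 + (r j / sqrt lstar - 1)) with (r j / sqrt lstar) by ring.
  assert (0 < sqrt lstar) by apply sqrt_lt_R0, lam_pos.
  field. lra.
Qed.

Lemma adjacent_ic_star q tq : (1 <= q < K)%nat -> 1 < tq -> teq Stot N K q tq = 0 ->
  tq <= sqrt (theta q / theta (q + 1)%nat) ->
  option_surplus theta (pstar theta lstar) (sstar theta lstar) q (q + 1)
  <= option_surplus theta (pstar theta lstar) (sstar theta lstar) q q.
Proof.
  intros Hq Htq Hroot Hle.
  rewrite !option_surplus_star by lia.
  set (A := sumR (fun k => INR (N k)) q). set (B := INR (N (q + 1)%nat)).
  assert (Hr2 : 0 < r (q + 1)%nat) by (apply sqrt_lt_R0, theta_pos; lia).
  assert (HD := D_pos).
  apply (sqrt_option_ic _ _ _ ((r q / r (q + 1)%nat * A + B) / D)).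
  - apply sqrt_lt_R0, lam_pos.
  - exact Hr2.
  - apply sqrt_theta_le; lia.
  - replace ((r q / r (q + 1)%nat * A + B) / D * r (q + 1)%nat)
      with ((A * r q + B * r (q + 1)%nat) / D) by (field; lra).
    apply Rle_div_l; [lra |]. rewrite sqrt_lam_mul_D.
    apply (sumR_prefix_weighted_le (fun k => INR (N k)) (fun k => r k)); [lia | | |].
    + intros; apply pos_INR.
    + intros; apply sqrt_pos.
    + intros k Hk. apply sqrt_theta_le; lia.
  - apply (tfun_nonneg_after_root A B D tq); [exact HD | | exact Htq | | exact Hroot].
    + left. apply N_sum_pos. lia.
    + rewrite <- sqrt_div_alt by (apply theta_pos; lia). exact Hle.
Qed.

Lemma star_menu_incentive_compatible (tq : nat -> R) :
  (forall q, (1 <= q <= K - 1)%nat -> 1 < tq q /\ teq Stot N K q (tq q) = 0) ->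
  (forall q, (1 <= q <= K - 1)%nat -> tq q <= sqrt (theta q / theta (q + 1)%nat)) ->
  forall pm : R -> R,
  (forall q x, (1 <= q <= K)%nat ->
     lowth (fun q => sstar theta lstar (q + 1)%nat) K q < x ->
     (q = 1%nat \/ x <= sstar theta lstar (q - 1 + 1)%nat) -> pm x = pstar theta lstar q) ->
  forall i, (1 <= i <= K)%nat ->
  (forall x, 0 <= x -> surplus theta pm i x <= surplus theta pm i (sstar theta lstar i)) /\
  pm (sstar theta lstar i) = pstar theta lstar i.
Proof.
  intros Htq Htq_le pm Hmenu i Hi.
  assert (Hadj : forall q, (1 <= q < K)%nat ->
    option_surplus theta (pstar theta lstar) (sstar theta lstar) q (q + 1)
    <= option_surplus theta (pstar theta lstar) (sstar theta lstar) q q).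
  { intros q Hq. destruct (Htq q ltac:(lia)) as [H1 H2].
    apply (adjacent_ic_star q (tq q)); auto. apply Htq_le. lia. }
  split.
  - intros x Hx.
    exact (menu_surplus_le_own theta _ _ K pstar_pos sstar_pos pstar_sstar_foc
             pstar_anti sstar_anti Hadj pm Hmenu i x Hi Hx).
  - exact (menu_price_own _ _ K sstar_pos sstar_anti pm Hmenu i Hi).
Qed.

End OptimalPrices.

Theorem theorem6 (Stot : R) (I : nat) (N : nat -> nat) (theta : nat -> R) (K : nat) :
  0 < Stot ->
  (1 <= I)%nat ->
  (forall i, (1 <= i <= I)%nat -> (0 < N i)%nat) ->
  (forall i, (1 <= i <= I)%nat -> 0 < theta i) ->
  (forall i, (1 <= i < I)%nat -> theta (i + 1)%nat < theta i) ->
  (1 <= K <= I)%nat ->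
  lam Stot N theta K < theta K ->
  (forall k, (K < k <= I)%nat -> ~ (lam Stot N theta k < theta k)) ->
  let lstar := lam Stot N theta K in
  (forall q, (1 <= q <= K - 1)%nat ->
     exists! t, 1 < t /\ teq Stot N K q t = 0)
  /\
  (forall tq : nat -> R,
     (forall q, (1 <= q <= K - 1)%nat -> 1 < tq q /\ teq Stot N K q (tq q) = 0) ->
     (forall q, (1 <= q <= K - 1)%nat -> tq q <= sqrt (theta q / theta (q + 1)%nat)) ->
     exists th : nat -> R,
       (forall q, (1 <= q < K - 1)%nat -> th (q + 1)%nat < th q) /\
       (forall q, (1 <= q <= K - 1)%nat -> 0 < th q) /\
       forall pm : R -> R,
         (forall q s, (1 <= q <= K)%nat -> lowth th K q < s ->
            (q = 1%nat \/ s <= th (q - 1)%nat) -> pm s = pstar theta lstar q) ->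
         (forall i, (1 <= i <= K)%nat ->
            0 <= sstar theta lstar i /\
            (forall s, 0 <= s ->
               surplus theta pm i s <= surplus theta pm i (sstar theta lstar i)) /\
            pm (sstar theta lstar i) = pstar theta lstar i) /\
         sumR (fun i => INR (N i) * pm (sstar theta lstar i) * sstar theta lstar i) K
         = sumR (fun i => INR (N i) * pstar theta lstar i * sstar theta lstar i) K).
Proof.
  intros HS _ HN Hth Hdec HK Hlam _ lstar; subst lstar.
  assert (HNK : forall i, (1 <= i <= K)%nat -> (0 < N i)%nat) by (intros; apply HN; lia).
  assert (HthK : forall i, (1 <= i <= K)%nat -> 0 < theta i) by (intros; apply Hth; lia).
  assert (Hdecr : forall i j, (1 <= i)%nat -> (i < j <= K)%nat -> theta j < theta i)
    by (intros i j Hi Hij; apply (strict_anti_of_succ theta I Hdec); lia).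
  split; [intros q Hq; exact (teq_unique_root Stot N K HS ltac:(lia) HNK q Hq) |].
  intros tq Htq Htq_le.
  exists (fun q => sstar theta (lam Stot N theta K) (q + 1)%nat). split; [| split].
  - intros q Hq. apply (sstar_anti Stot N theta K HS ltac:(lia) HNK HthK Hdecr); lia.
  - intros q Hq. apply (sstar_pos Stot N theta K HS ltac:(lia) HNK HthK Hdecr Hlam); lia.
  - intros pm Hmenu.
    pose proof (star_menu_incentive_compatible Stot N theta K HS ltac:(lia) HNK HthK Hdecr Hlam
                  tq Htq Htq_le pm Hmenu) as Hic.
    split.
    + intros i Hi. destruct (Hic i Hi) as [Hopt Hprice].
      split; [left; apply (sstar_pos Stot N theta K HS ltac:(lia) HNK HthK Hdecr Hlam i Hi) | auto].
    + apply sumR_ext. intros i Hi. destruct (Hic i Hi) as [_ ->]. reflexivity.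
Qed.
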